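(* Let $n\ge3$, let $H$ be a non-trivial finitely generated abelian group, let $G$ be a group with a surjective homomorphism $\sigma\colon G\to S_n$, and let $W=H\wr_\sigma G=H^n\rtimes_\sigma G$. Assume that every abelian normal subgroup of $W$ is contained in $H^n$. If $G$ has the $R_\infty$-property, then $W$ has the $R_\infty$-property.
   Context: $H\wr_\sigma G=H^n\rtimes_\sigma G$ is the semidirect product in which $G$ acts on $H^n$ by permuting coordinates through $\sigma$: $g\cdot(h_1,\dots,h_n)=(h_{\sigma(g)(1)},\dots,h_{\sigma(g)(n)})$ (with the composition convention in $S_n$ making this a left action); $H^n$ is identified with $\{(\mathbf h,1)\}$. For an automorphism $\varphi$ of a group $X$, elements $x,y\in X$ are $\varphi$-twisted conjugate if $x=zy\varphi(z)^{-1}$ for some $z\in X$; the number of equivalence classes is the Reidemeister number $R(\varphi)\in\mathbb N\cup\{\infty\}$. $X$ has the $R_\infty$-property if $R(\varphi)=\infty$ for every $\varphi\in\mathrm{Aut}(X)$. *)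

From Stdlib Require List.
From mathcomp Require Import all_boot all_fingroup.
Set Implicit Arguments. Unset Strict Implicit. Unset Printing Implicit Defensive.

Definition is_group (T : Type) (mul : T -> T -> T) (one : T) (inv : T -> T) : Prop :=
  (forall x y z, mul x (mul y z) = mul (mul x y) z) /\
  (forall x, mul one x = x) /\ (forall x, mul x one = x) /\
  (forall x, mul (inv x) x = one) /\ (forall x, mul x (inv x) = one).

Definition is_abelian (T : Type) (mul : T -> T -> T) : Prop :=
  forall x y, mul x y = mul y x.

Inductive gen_by (T : Type) (mul : T -> T -> T) (one : T) (inv : T -> T)
    (l : list T) : T -> Prop :=
  | gen_base x : List.In x l -> gen_by mul one inv l x
  | gen_one : gen_by mul one inv l one
  | gen_mul x y : gen_by mul one inv l x -> gen_by mul one inv l y ->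
      gen_by mul one inv l (mul x y)
  | gen_inv x : gen_by mul one inv l x -> gen_by mul one inv l (inv x).

Definition fin_generated (T : Type) (mul : T -> T -> T) (one : T) (inv : T -> T) : Prop :=
  exists l : list T, forall x, gen_by mul one inv l x.

Definition is_automorphism (T : Type) (mul : T -> T -> T) (phi : T -> T) : Prop :=
  (forall x y, phi (mul x y) = mul (phi x) (phi y)) /\
  (forall y, exists x, phi x = y) /\ (forall x y, phi x = phi y -> x = y).

Definition twisted_conj (T : Type) (mul : T -> T -> T) (inv : T -> T)
    (phi : T -> T) (x y : T) : Prop :=
  exists z, x = mul (mul z y) (inv (phi z)).

Definition reidemeister_infinite (T : Type) (mul : T -> T -> T) (inv : T -> T)
    (phi : T -> T) : Prop :=
  ~ exists l : list T, forall x, exists2 y, List.In y l & twisted_conj mul inv phi x y.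

Definition R_infty (T : Type) (mul : T -> T -> T) (inv : T -> T) : Prop :=
  forall phi, is_automorphism mul phi -> reidemeister_infinite mul inv phi.

(* Permutational wreath product H wr_sigma G = H^n x| G.
   Left action: g . h = (i |-> h (sigma g i)); with MathComp's convention
   (s * t) i = t (s i), this is a left action for sigma a homomorphism. *)
Section Wreath.
Variables (n : nat) (H G : Type).
Variables (mulH : H -> H -> H) (oneH : H) (invH : H -> H).
Variables (mulG : G -> G -> G) (oneG : G) (invG : G -> G).
Variable sigma : G -> 'S_n.

Definition wact (g : G) (h : 'I_n -> H) : 'I_n -> H := fun i => h (sigma g i).

Definition wr_mul (a b : ('I_n -> H) * G) : ('I_n -> H) * G :=
  (fun i => mulH (a.1 i) (wact a.2 b.1 i), mulG a.2 b.2).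

Definition wr_one : ('I_n -> H) * G := (fun _ => oneH, oneG).

Definition wr_inv (a : ('I_n -> H) * G) : ('I_n -> H) * G :=
  (wact (invG a.2) (fun i => invH (a.1 i)), invG a.2).

Definition wr_abelian_normal (S : ('I_n -> H) * G -> Prop) : Prop :=
  S wr_one /\
  (forall x y, S x -> S y -> S (wr_mul x y)) /\
  (forall x, S x -> S (wr_inv x)) /\
  (forall x w, S x -> S (wr_mul (wr_mul w x) (wr_inv w))) /\
  (forall x y, S x -> S y -> wr_mul x y = wr_mul y x).
End Wreath.

(* The base group H^n is characteristic in W: the image and the preimage of
   H^n under an automorphism phi of W are again abelian normal subgroups, so
   by hypothesis both lie in H^n.  Hence phi induces an automorphism psi of
   W / H^n = G, and the projection W -> G maps each phi-twisted class onto a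
   psi-twisted class; finitely many phi-classes would give finitely many
   psi-classes. *)
From mathcomp Require Import all_boot all_fingroup.
From Stdlib Require Import FunctionalExtensionality.

Set Implicit Arguments.
Unset Strict Implicit.
Unset Printing Implicit Defensive.

(* For the wreath product operations this unfolds to [wr_abelian_normal]. *)
Definition abelian_normal (T : Type) (mul : T -> T -> T) (one : T)
    (inv : T -> T) (S : T -> Prop) : Prop :=
  S one /\
  (forall x y, S x -> S y -> S (mul x y)) /\
  (forall x, S x -> S (inv x)) /\
  (forall x w, S x -> S (mul (mul w x) (inv w))) /\
  (forall x y, S x -> S y -> mul x y = mul y x).

Section GroupFacts.
Variables (T : Type) (mul : T -> T -> T) (one : T) (inv : T -> T).
Hypothesis grpT : is_group mul one inv.

Lemma mul_eq1_inv x y : mul y x = one -> y = inv x.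
Proof.
case: grpT => mulA [mul1 [mulx1 [_ mulV]]] yx1.
by rewrite -[y]mulx1 -(mulV x) mulA yx1 mul1.
Qed.

Lemma eq_of_mulV x y : mul x (inv y) = one -> x = y.
Proof.
case: grpT => mulA [mul1 [mulx1 [Vmul _]]] xy1.
by rewrite -[x]mulx1 -(Vmul y) mulA xy1 mul1.
Qed.

End GroupFacts.

Section Homomorphisms.
Variables (T : Type) (mul : T -> T -> T) (one : T) (inv : T -> T).
Hypothesis grpT : is_group mul one inv.
Variables (U : Type) (mulU : U -> U -> U) (oneU : U) (invU : U -> U).
Hypothesis grpU : is_group mulU oneU invU.
Variable f : T -> U.
Hypothesis fM : forall x y, f (mul x y) = mulU (f x) (f y).

Lemma hom_one : f one = oneU.
Proof.
case: grpT grpU => _ [mul1 _] [mulA [_ [mulx1 [_ mulV]]]].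
have f1_idem : mulU (f one) (f one) = f one by rewrite -fM mul1.
by rewrite -[LHS]mulx1 -(mulV (f one)) mulA f1_idem.
Qed.

Lemma hom_inv x : f (inv x) = invU (f x).
Proof.
apply: (mul_eq1_inv grpU); case: grpT => _ [_ [_ [Vmul _]]].
by rewrite -fM Vmul hom_one.
Qed.

End Homomorphisms.

Section AbelianNormalTransport.
Variables (T : Type) (mul : T -> T -> T) (one : T) (inv : T -> T).
Hypothesis grpT : is_group mul one inv.
Variable phi : T -> T.
Hypothesis phiM : forall x y, phi (mul x y) = mul (phi x) (phi y).
Variable S : T -> Prop.
Hypothesis abnS : abelian_normal mul one inv S.

Lemma abelian_normal_image :
  (forall y, exists x, phi x = y) ->
  abelian_normal mul one inv (fun y => exists2 x, S x & y = phi x).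
Proof.
move=> phi_surj; have phi1 := hom_one grpT grpT phiM.
have phiV := hom_inv grpT grpT phiM.
case: abnS => S1 [SM [SV [SJ Scomm]]].
split; [|split; [|split; [|split]]].
- by exists one; rewrite ?phi1.
- by move=> _ _ [x Sx ->] [y Sy ->]; exists (mul x y); rewrite ?phiM; auto.
- by move=> _ [x Sx ->]; exists (inv x); rewrite ?phiV; auto.
- move=> _ w [x Sx ->]; have [v <-] := phi_surj w.
  by exists (mul (mul v x) (inv v)); rewrite ?phiM ?phiV; auto.
- by move=> _ _ [x Sx ->] [y Sy ->]; rewrite -!phiM Scomm.
Qed.

Lemma abelian_normal_preimage :
  (forall x y, phi x = phi y -> x = y) ->
  abelian_normal mul one inv (fun x => S (phi x)).
Proof.
move=> phi_inj; have phi1 := hom_one grpT grpT phiM.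
have phiV := hom_inv grpT grpT phiM.
case: abnS => S1 [SM [SV [SJ Scomm]]].
split; [|split; [|split; [|split]]].
- by rewrite phi1.
- by move=> x y Sx Sy; rewrite phiM; auto.
- by move=> x Sx; rewrite phiV; auto.
- by move=> x w Sx; rewrite !phiM phiV; auto.
- by move=> x y Sx Sy; apply: phi_inj; rewrite !phiM Scomm.
Qed.

End AbelianNormalTransport.

Section InducedAutomorphism.
Variables (W : Type) (mulW : W -> W -> W) (oneW : W) (invW : W -> W).
Variables (G : Type) (mulG : G -> G -> G) (oneG : G) (invG : G -> G).
Hypotheses (grpW : is_group mulW oneW invW) (grpG : is_group mulG oneG invG).
Variables (pi : W -> G) (sec : G -> W).
Hypothesis piM : forall x y, pi (mulW x y) = mulG (pi x) (pi y).
Hypothesis secK : forall g, pi (sec g) = g.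
Variable phi : W -> W.
Hypothesis phi_aut : is_automorphism mulW phi.
Hypothesis phi_ker : forall x, pi x = oneG -> pi (phi x) = oneG.
Hypothesis phi_ker_rev : forall x, pi (phi x) = oneG -> pi x = oneG.

Let psi g := pi (phi (sec g)).

Let pi_phi x : pi (phi x) = psi (pi x).
Proof.
case: phi_aut => phiM _; case: grpW => mulWA [_ [_ [Vmul _]]].
case: grpG => _ [mul1 [_ [_ mulV]]].
set s := sec (pi x).
have x_dec : x = mulW (mulW x (invW s)) s.
  by rewrite -mulWA Vmul; case: grpW => _ [_ [->]].
have x_s_ker : pi (mulW x (invW s)) = oneG.
  by rewrite piM (hom_inv grpW grpG piM) secK mulV.
by rewrite {1}x_dec phiM piM phi_ker // mul1.
Qed.

Lemma induced_automorphism :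
  exists psi, is_automorphism mulG psi /\ forall x, pi (phi x) = psi (pi x).
Proof.
case: phi_aut => phiM [phi_surj _].
have psiM g h : psi (mulG g h) = mulG (psi g) (psi h).
  by rewrite -{1}(secK g) -{1}(secK h) -piM -pi_phi phiM piM.
exists psi; split; last exact: pi_phi.
split=> //; split=> [g|g h psi_gh].
  have [x phi_x] := phi_surj (sec g).
  by exists (pi x); rewrite -pi_phi phi_x secK.
apply: (eq_of_mulV grpG).
have piV := hom_inv grpW grpG piM.
rewrite -(secK g) -(secK h) -piV -piM phi_ker_rev //.
rewrite phiM (hom_inv grpW grpW phiM) piM piV -/(psi g) -/(psi h) psi_gh.
by case: grpG => _ [_ [_ [_ ->]]].
Qed.

End InducedAutomorphism.

Lemma reidemeister_infinite_quotient (W G : Type)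
    (mulW : W -> W -> W) (invW : W -> W) (mulG : G -> G -> G) (invG : G -> G)
    (pi : W -> G) (phi : W -> W) (psi : G -> G) :
  (forall x y, pi (mulW x y) = mulG (pi x) (pi y)) ->
  (forall x, pi (invW x) = invG (pi x)) ->
  (forall g, exists x, pi x = g) ->
  (forall x, pi (phi x) = psi (pi x)) ->
  reidemeister_infinite mulG invG psi -> reidemeister_infinite mulW invW phi.
Proof.
move=> piM piV pi_surj pi_phi psi_inf [l l_meets]; apply: psi_inf.
exists (List.map pi l) => g; have [x <-] := pi_surj g.
have [y yl [z ->]] := l_meets x.
exists (pi y); first exact: List.in_map.
by exists (pi z); rewrite piM piM piV pi_phi.
Qed.

Section WreathProduct.
Variables (n : nat) (H G : Type).
Variables (mulH : H -> H -> H) (oneH : H) (invH : H -> H).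
Variables (mulG : G -> G -> G) (oneG : G) (invG : G -> G).
Variable sigma : G -> 'S_n.
Hypotheses (grpH : is_group mulH oneH invH) (abH : is_abelian mulH).
Hypothesis grpG : is_group mulG oneG invG.
Hypothesis sigmaM : forall a b, sigma (mulG a b) = (sigma a * sigma b)%g.

Local Notation wmul := (wr_mul mulH mulG sigma).
Local Notation wone := (wr_one n oneH oneG).
Local Notation winv := (wr_inv invH invG sigma).

Lemma sigma_one : sigma oneG = 1%g.
Proof.
have := sigmaM oneG oneG; case: grpG => _ [-> _] sigma11.
by apply: (mulgI (sigma oneG)); rewrite -sigma11 mulg1.
Qed.

Lemma wr_is_group : is_group wmul wone winv.
Proof.
case: grpG => mulGA [mul1G [mulG1 [VmulG mulGV]]].
case: grpH => mulHA [mul1H [mulH1 [VmulH mulHV]]].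
rewrite /wr_mul /wr_one /wr_inv /wact.
split; [|split; [|split; [|split]]] => [[a g] [b h] [c k]|[a g]|[a g]|[a g]|[a g]];
  congr pair => //=; apply: functional_extensionality => i.
- by rewrite mulHA sigmaM permM.
- by rewrite sigma_one perm1 mul1H.
- by rewrite mulH1.
- by rewrite VmulH.
- by rewrite -permM -sigmaM mulGV sigma_one perm1 mulHV.
Qed.

Lemma wr_base_abelian_normal :
  abelian_normal wmul wone winv (fun x => x.2 = oneG).
Proof.
case: grpG => _ [mul1G [mulG1 [_ mulGV]]].
split; [|split; [|split; [|split]]] => //=.
- by move=> x y -> ->; rewrite mul1G.
- by move=> x /= ->; symmetry; apply: (mul_eq1_inv grpG); rewrite mul1G.
- by move=> x w ->; rewrite mulG1 mulGV.
move=> [a g] [b h] /= -> ->; congr pair.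
by apply: functional_extensionality => i; rewrite /wact sigma_one perm1 abH.
Qed.

End WreathProduct.

Theorem theorem3p13 (n : nat) (H G : Type)
  (mulH : H -> H -> H) (oneH : H) (invH : H -> H)
  (mulG : G -> G -> G) (oneG : G) (invG : G -> G)
  (sigma : G -> 'S_n) :
  3 <= n ->
  is_group mulH oneH invH -> is_abelian mulH ->
  fin_generated mulH oneH invH -> (exists h : H, h <> oneH) ->
  is_group mulG oneG invG ->
  (forall a b, sigma (mulG a b) = (sigma a * sigma b)%g) ->
  (forall p : 'S_n, exists g, sigma g = p) ->
  (forall S, wr_abelian_normal mulH oneH invH mulG oneG invG sigma S ->
     forall x, S x -> x.2 = oneG) ->
  R_infty mulG invG ->
  R_infty (wr_mul mulH mulG sigma) (wr_inv invH invG sigma).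
Proof.
move=> _ grpH abH _ _ grpG sigmaM _ base_max RG phi phi_aut.
have grpW := wr_is_group grpH grpG sigmaM.
have base_abn := wr_base_abelian_normal oneH invH abH grpG sigmaM.
have [phiM [phi_surj phi_inj]] := phi_aut.
have phi_base x : x.2 = oneG -> (phi x).2 = oneG.
  move=> x_base; apply: (base_max _ (abelian_normal_image grpW phiM base_abn phi_surj)).
  by exists x.
have phi_base_rev x : (phi x).2 = oneG -> x.2 = oneG.
  exact: (base_max _ (abelian_normal_preimage grpW phiM base_abn phi_inj)).
have [psi [psi_aut pi_phi]] := induced_automorphism grpW grpG (pi := snd)
  (sec := fun g => (fun _ => oneH, g)) (fun _ _ => erefl) (fun _ => erefl)
  phi_aut phi_base phi_base_rev.
apply: (reidemeister_infinite_quotient (pi := snd)) pi_phi (RG psi psi_aut) => //.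
by move=> g; exists (fun _ => oneH, g).
Qed.
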